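(* Let $F:\mathbb{R}^N\times\mathbb{R}\times\mathbb{R}^N\times S^N\to\mathbb{R}$ be continuous and uniformly elliptic: there are $0<\lambda\le\Lambda$ with $\lambda\,\mathrm{tr}(Q)\le F(x,t,p,X)-F(x,t,p,X+Q)\le\Lambda\,\mathrm{tr}(Q)$ for all $x,p,t,X$ and all $Q\in S^N$, $Q\ge0$. Let $A$ be a metric space and $b:\mathbb{R}^N\times A\to\mathbb{R}^N$, $c:\mathbb{R}^N\times A\to\mathbb{R}$ continuous, such that for every $R>0$ there is $K_R$ with $\sup_{|x|\le R,\alpha}(|b|+|c|)\le K_R$ and $|b(x,\alpha)-b(y,\alpha)|\le K_R|x-y|$ for $|x|,|y|\le R$; $c\ge0$ and $c$ continuous in $x$ uniformly in $|x|\le R,\alpha$; and for some $R_o>0$, $\sup_\alpha(b(x,\alpha)\cdot x-c(x,\alpha)|x|^2\log|x|)\le\lambda-(N-1)\Lambda$ for $|x|\ge R_o$. Assume $F(x,t,p,0)\le\sup_{\alpha\in A}\{c(x,\alpha)t-b(x,\alpha)\cdot p\}$ for all $x,t,p$. Let $v\in LSC(\mathbb{R}^N)$ be a viscosity supersolution of $F(x,v,Dv,D^2v)=0$ in $\mathbb{R}^N$ with $\liminf_{|x|\to\infty}v(x)/\log|x|\ge0$. If either $c\equiv0$ or $v\le0$, then $v$ is constant.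
   Context: $S^N$ is the space of real symmetric $N\times N$ matrices. *)

From HB Require Import structures.
From mathcomp Require Import all_boot all_order all_algebra.
From mathcomp Require Import all_classical all_reals all_analysis.
Set Implicit Arguments. Unset Strict Implicit. Unset Printing Implicit Defensive.
Import Order.TTheory GRing.Theory Num.Theory.
Import numFieldNormedType.Exports.
Local Open Scope classical_set_scope.
Local Open Scope ring_scope.

Section Defs.
Variables (R : realType) (N : nat).

Definition dotv (p x : 'rV[R]_N) : R := \sum_(i < N) p 0 i * x 0 i.
Definition enorm (x : 'rV[R]_N) : R := Num.sqrt (dotv x x).

Definition ebasis (i : 'I_N) : 'rV[R]_N := delta_mx 0 i.

Definition symmx (X : 'M[R]_N) : Prop := X^T = X.
Definition psdmx (Q : 'M[R]_N) : Prop := forall u : 'rV[R]_N, 0 <= (u *m Q *m u^T) 0 0.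

(* C^2 functions on R^N: all first and second partial derivatives exist
   everywhere and are continuous (which is the classical C^2). *)
Definition C2 (phi : 'rV[R]_N -> R) : Prop :=
  continuous phi /\
  (forall i x, derivable phi x (ebasis i)) /\
  (forall i, continuous (fun y => 'D_(ebasis i) phi y)) /\
  (forall i j x, derivable (fun y => 'D_(ebasis i) phi y) x (ebasis j)) /\
  (forall i j, continuous (fun y => 'D_(ebasis j) (fun z => 'D_(ebasis i) phi z) y)).

Definition gradient (phi : 'rV[R]_N -> R) (x : 'rV[R]_N) : 'rV[R]_N :=
  \row_i 'D_(ebasis i) phi x.
Definition hessian (phi : 'rV[R]_N -> R) (x : 'rV[R]_N) : 'M[R]_N :=
  \matrix_(i, j) 'D_(ebasis j) (fun z => 'D_(ebasis i) phi z) x.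

Definition lsc (v : 'rV[R]_N -> R) : Prop :=
  forall x (e : R), 0 < e -> \forall y \near x, v x - e < v y.

Definition local_min (f : 'rV[R]_N -> R) (x0 : 'rV[R]_N) : Prop :=
  \forall y \near x0, f x0 <= f y.

Definition visc_supersol
  (F : 'rV[R]_N -> R -> 'rV[R]_N -> 'M[R]_N -> R) (v : 'rV[R]_N -> R) : Prop :=
  lsc v /\
  forall (phi : 'rV[R]_N -> R) (x0 : 'rV[R]_N),
    C2 phi -> local_min (fun y => v y - phi y) x0 ->
    0 <= F x0 (v x0) (gradient phi x0) (hessian phi x0).

End Defs.

From HB Require Import structures.
From mathcomp Require Import all_boot all_order all_algebra.
From mathcomp Require Import all_classical all_reals all_analysis.
From mathcomp Require Import ring lra.
Import Order.TTheory GRing.Theory Num.Theory.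
Import numFieldNormedType.Exports.
Local Open Scope classical_set_scope.
Local Open Scope ring_scope.
Set Implicit Arguments. Unset Strict Implicit. Unset Printing Implicit Defensive.

(* A supersolution that attains its minimum m is constant: otherwise, around a point y
   with v y > m, take the point x1 of [v <= m] closest to y; for k large the Hopf
   function m + eta (exp (- k |x - y|^2) - exp (- k |x1 - y|^2)) is a strict classical
   subsolution on the annulus rho/2 <= |x - y| <= rho, rho = |x1 - y|, and touches
   v from below there, contradicting the supersolution property.
   The minimum is attained: let m be the minimum of v on the ball of radius
   R1 >= max 2 Ro and G q = - ln (q + 1) / 2 + 1 / (q + 1). For |x| > R1 the
   growth condition makes m + eps (G |x|^2 - G R1^2) a strict subsolution; it equals m
   on the sphere and, since liminf v / ln |x| >= 0, lies below v far out, so it stays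
   below v everywhere. Letting eps go to 0 gives v >= m. When c is not identically 0,
   the sign v <= 0 (hence m < 0 unless v = 0) controls the zeroth-order term. *)

Section Euclidean.
Variables (R : realType) (N : nat).
Implicit Types (a b x y z : 'rV[R]_N).

Lemma dotvC a b : dotv a b = dotv b a.
Proof. by apply: eq_bigr => i _; rewrite mulrC. Qed.

Lemma dotvDl a b x : dotv (a + b) x = dotv a x + dotv b x.
Proof. by rewrite /dotv -big_split; apply: eq_bigr => i _; rewrite mxE mulrDl. Qed.

Lemma dotvZl (k : R) a x : dotv (k *: a) x = k * dotv a x.
Proof. by rewrite /dotv mulr_sumr; apply: eq_bigr => i _; rewrite mxE mulrA. Qed.

Lemma dotvNl a x : dotv (- a) x = - dotv a x.
Proof. by rewrite -scaleN1r dotvZl mulN1r. Qed.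

Lemma dotvBl a b x : dotv (a - b) x = dotv a x - dotv b x.
Proof. by rewrite dotvDl dotvNl. Qed.

Lemma dotvDr a b x : dotv x (a + b) = dotv x a + dotv x b.
Proof. by rewrite dotvC dotvDl !(dotvC x). Qed.

Lemma dotvZr (k : R) a x : dotv x (k *: a) = k * dotv x a.
Proof. by rewrite dotvC dotvZl dotvC. Qed.

Lemma dotvBr a b x : dotv x (a - b) = dotv x a - dotv x b.
Proof. by rewrite dotvC dotvBl !(dotvC x). Qed.

Lemma dotvv_ge0 x : 0 <= dotv x x.
Proof. by apply: sumr_ge0 => i _; rewrite -expr2 sqr_ge0. Qed.

Lemma dotv0 x : dotv x 0 = 0.
Proof. by rewrite /dotv big1 // => i _; rewrite mxE mulr0. Qed.

Lemma dotvv_eq0 x : dotv x x = 0 -> x = 0.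
Proof.
move=> /eqP; rewrite /dotv psumr_eq0 => [/allP x0|i _]; last by rewrite -expr2 sqr_ge0.
apply/rowP => i; rewrite mxE; apply/eqP.
by have := x0 i (mem_index_enum i); rewrite mulf_eq0 orbb.
Qed.

Lemma enorm_ge0 x : 0 <= enorm x.
Proof. exact: sqrtr_ge0. Qed.

Lemma enorm_sqr x : enorm x ^+ 2 = dotv x x.
Proof. by rewrite sqr_sqrtr // dotvv_ge0. Qed.

Lemma enorm0 : enorm (0 : 'rV[R]_N) = 0.
Proof. by rewrite /enorm dotv0 sqrtr0. Qed.

Lemma enorm_eq0 x : enorm x = 0 -> x = 0.
Proof. by move=> x0; apply: dotvv_eq0; rewrite -enorm_sqr x0 expr0n. Qed.

Lemma ler_coord_enorm x i : `|x 0 i| <= enorm x.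
Proof.
rewrite -ler_sqr ?nnegrE ?enorm_ge0 // enorm_sqr real_normK ?num_real //.
by rewrite /dotv (bigD1 i) //= -expr2 lerDl sumr_ge0 // => j _; rewrite -expr2 sqr_ge0.
Qed.

Lemma dotv_le_enorm a b : dotv a b <= enorm a * enorm b.
Proof.
set A := enorm a; set B := enorm b.
have [A0|A0] := eqVneq A 0; first by rewrite (enorm_eq0 A0) dotvC dotv0 A0 mul0r.
have [B0|B0] := eqVneq B 0; first by rewrite (enorm_eq0 B0) dotv0 B0 mulr0.
have Agt0 : 0 < A by rewrite lt_def A0 enorm_ge0.
have Bgt0 : 0 < B by rewrite lt_def B0 enorm_ge0.
have := dotvv_ge0 (B *: a - A *: b).
rewrite !(dotvBl, dotvBr, dotvZl, dotvZr) -!enorm_sqr -/A -/B (dotvC b a) => h.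
have : 0 <= 2 * (A * B) * (A * B - dotv a b) by nra.
by rewrite pmulr_rge0 ?subr_ge0 // !mulr_gt0.
Qed.

Lemma ler_norm_dotv a b : `|dotv a b| <= enorm a * enorm b.
Proof.
rewrite ler_norml dotv_le_enorm andbT lerNl -dotvNl.
have -> : enorm a = enorm (- a) by rewrite /enorm dotvNl dotvC dotvNl opprK.
exact: dotv_le_enorm.
Qed.

Lemma enormD a b : enorm (a + b) <= enorm a + enorm b.
Proof.
rewrite -ler_sqr ?nnegrE ?addr_ge0 ?enorm_ge0 // enorm_sqr.
rewrite dotvDl !dotvDr -!enorm_sqr (dotvC b a).
have := dotv_le_enorm a b; nra.
Qed.

End Euclidean.

Section SquaredDistance.
Variables (R : realType) (N : nat).
Implicit Types (x z : 'rV[R]_N).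

Definition sqdist z x := dotv (x - z) (x - z).

Lemma sqdist_ge0 z x : 0 <= sqdist z x.
Proof. exact: dotvv_ge0. Qed.

Lemma sqdistE z x : sqdist z x = enorm (x - z) ^+ 2.
Proof. by rewrite enorm_sqr. Qed.

Lemma dotv_ebasis x i : dotv x (ebasis R i) = x 0 i.
Proof.
rewrite /dotv (bigD1 i) //= big1 ?addr0; first by rewrite mxE !eqxx mulr1.
by move=> j ji; rewrite mxE (negbTE ji) andbF mulr0.
Qed.

Lemma sqdist_line z x i (h : R) :
  sqdist z (h *: ebasis R i + x) = sqdist z x + 2 * h * (x 0 i - z 0 i) + h ^+ 2.
Proof.
rewrite /sqdist (_ : h *: ebasis R i + x - z = (x - z) + h *: ebasis R i); last first.
  by rewrite [RHS]addrC addrA.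
have : (x - z) 0 i = x 0 i - z 0 i by rewrite !mxE.
move: (x - z) => u <-.
rewrite dotvDl !dotvDr !dotvZl !dotvZr !dotv_ebasis (dotvC (ebasis R i)) dotv_ebasis.
by rewrite mxE !eqxx /=; ring.
Qed.

Lemma continuous_coordB z i : continuous (fun y : 'rV[R]_N => y 0 i - z 0 i).
Proof. by move=> y; apply: continuousB; [exact: coord_continuous | exact: cst_continuous]. Qed.

Lemma continuous_sqdist z : continuous (sqdist z).
Proof.
pose f i (y : 'rV[R]_N) := (y 0 i - z 0 i) * (y 0 i - z 0 i).
suff : forall s, continuous (fun y => \sum_(i <- s) f i y).
  have -> : sqdist z = (fun y => \sum_(i <- index_enum 'I_N) f i y).
    by apply: funext => y; apply: eq_bigr => i _; rewrite !mxE.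
  exact.
elim=> [|i s IH].
  rewrite (_ : (fun _ => _) = cst 0) => [y|]; first exact: cst_continuous.
  by under eq_fun do rewrite big_nil.
rewrite (_ : (fun _ => _) = f i + (fun y => \sum_(j <- s) f j y)) => [y|]; last first.
  by apply: funext => y; rewrite big_cons.
by apply: continuousD; [apply: continuousM; exact: continuous_coordB | exact: IH].
Qed.

Lemma continuous_enormB z : continuous (fun x => enorm (x - z)).
Proof.
move=> x; apply: (@continuous_comp _ _ _ (sqdist z)); first exact: continuous_sqdist.
exact: sqrt_continuous.
Qed.

Lemma is_derive_along (f : 'rV[R]_N -> R) x u (g : R -> R) (dg : R) :
  (forall h, f (h *: u + x) = g h) -> is_derive (0 : R) 1 g dg -> is_derive x u f dg.
Proof.
move=> fg [dg1 <-].
have e : (fun h : R => f (h *: u + x)) = g by apply: funext.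
split; first by apply/derivable1P; rewrite e.
rewrite /derive (_ : f x = g 0); last by rewrite -fg scale0r add0r.
suff -> : (fun h : R => h^-1 *: ((f \o shift x) (h *: u) - g 0)) =
          (fun h : R => h^-1 *: ((g \o shift 0) (h *: 1) - g 0)) by [].
by apply: funext => h /=; rewrite addr0 fg [h *: 1]mulr1.
Qed.

End SquaredDistance.

Lemma derivable1_continuous (R : realType) (f : R -> R) (x : R) :
  derivable f x 1 -> {for x, continuous f}.
Proof. by move=> df; apply/differentiable_continuous/derivable1_diffP. Qed.

Definition C2_profile (R : realType) (H H1 H2 : R -> R) :=
  [/\ forall q : R, 0 <= q -> is_derive q 1 H (H1 q),
      forall q : R, 0 <= q -> is_derive q 1 H1 (H2 q)
    & forall q : R, 0 <= q -> {for q, continuous H2}].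

Section Radial.
Variables (R : realType) (N : nat) (z : 'rV[R]_N) (H H1 H2 : R -> R).
Hypothesis C2_H : C2_profile H H1 H2.
Let dH (q : R) : 0 <= q -> is_derive q 1 H (H1 q). Proof. by case: C2_H => + _ _; apply. Qed.
Let dH1 (q : R) : 0 <= q -> is_derive q 1 H1 (H2 q). Proof. by case: C2_H => _ + _; apply. Qed.
Let cH2 (q : R) : 0 <= q -> {for q, continuous H2}. Proof. by case: C2_H => _ _; apply. Qed.

Definition radial (x : 'rV[R]_N) := H (sqdist z x).

Let continuous_sqdist_comp (G : R -> R) :
  (forall q : R, 0 <= q -> {for q, continuous G}) -> continuous (G \o sqdist z).
Proof.
by move=> cG x; apply: continuous_comp; [exact: continuous_sqdist | exact/cG/sqdist_ge0].
Qed.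

Let is_derive_quadratic (Q a : R) :
  is_derive (0 : R) 1 (fun h : R => Q + 2 * h * a + h ^+ 2) (2 * a).
Proof.
have id0 := is_derive_id (0 : R) 1.
have := is_deriveD (is_deriveD (is_derive_cst Q (0 : R) 1) (is_deriveZ (2 * a) id0))
  (is_deriveX 2 id0).
have -> : cst Q + (2 * a) \*: id + id ^+ 2 = (fun h : R => Q + 2 * h * a + h ^+ 2).
  by apply: funext => h /=; rewrite !fctE /=; change ((2 * a) *: h) with ((2 * a) * h); ring.
by move/is_derive_eq; apply; rewrite /GRing.scale /=; ring.
Qed.

Let is_derive_comp_line (G G' : R -> R) (x : 'rV[R]_N) (j : 'I_N) :
  (forall q : R, 0 <= q -> is_derive q 1 G (G' q)) ->
  is_derive (0 : R) 1 (fun h : R => G (sqdist z (h *: ebasis R j + x)))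
    (G' (sqdist z x) * (2 * (x 0 j - z 0 j))).
Proof.
move=> dG; pose s (h : R) := sqdist z x + 2 * h * (x 0 j - z 0 j) + h ^+ 2.
rewrite (_ : (fun h => _) = G \o s); last by apply: funext => h; rewrite /= sqdist_line.
have s0 : s 0 = sqdist z x by rewrite /s mulr0 mul0r addr0 expr0n addr0.
apply: is_derive1_comp; last exact: is_derive_quadratic.
by rewrite s0; apply/dG/sqdist_ge0.
Qed.

Lemma radial_partial x i :
  is_derive x (ebasis R i) radial (2 * H1 (sqdist z x) * (x 0 i - z 0 i)).
Proof.
apply: (is_derive_along (g := fun h => H (sqdist z (h *: ebasis R i + x)))) => //.
by move/is_derive_eq: (is_derive_comp_line x i dH); apply; ring.
Qed.

Lemma radial_partialE x i : 'D_(ebasis R i) radial x = 2 * H1 (sqdist z x) * (x 0 i - z 0 i).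
Proof. by have [_ ->] := radial_partial x i. Qed.

Lemma radial_partial2 x i j :
  is_derive x (ebasis R j) (fun y => 'D_(ebasis R i) radial y)
    (2 * (H2 (sqdist z x) * (2 * (x 0 j - z 0 j)) * (x 0 i - z 0 i)
          + H1 (sqdist z x) * (i == j)%:R)).
Proof.
under eq_fun do rewrite radial_partialE.
apply: (is_derive_along (g := fun h => 2 * H1 (sqdist z (h *: ebasis R j + x))
                                   * ((x 0 i - z 0 i) + h * (i == j)%:R))).
  by move=> h; rewrite !mxE eqxx /=; congr (_ * _); ring.
have dl : is_derive (0 : R) 1 (fun h => (x 0 i - z 0 i) + h * (i == j)%:R) (i == j)%:R.
  have := is_deriveD (is_derive_cst (x 0 i - z 0 i) (0 : R) 1)
                     (is_deriveZ (i == j)%:R (is_derive_id (0 : R) 1)).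
  have -> : cst (x 0 i - z 0 i) + (i == j)%:R \*: id = (fun h => (x 0 i - z 0 i) + h * (i == j)%:R).
    by apply: funext => h; rewrite !fctE /GRing.scale /= mulrC.
  by move/is_derive_eq; apply; rewrite /GRing.scale /= mulr1 add0r.
have := is_deriveM (is_deriveZ 2 (is_derive_comp_line x j dH1)) dl.
by move/is_derive_eq; apply; rewrite /= scale0r add0r mul0r addr0 /GRing.scale /=; ring.
Qed.

Lemma radial_partial2E x i j :
  'D_(ebasis R j) (fun y => 'D_(ebasis R i) radial y) x =
    2 * (H2 (sqdist z x) * (2 * (x 0 j - z 0 j)) * (x 0 i - z 0 i)
         + H1 (sqdist z x) * (i == j)%:R).
Proof. by have [_ ->] := radial_partial2 x i j. Qed.

Lemma radial_C2 : C2 radial.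
Proof.
have cH (q : R) : 0 <= q -> {for q, continuous H}.
  by move=> q0; apply: derivable1_continuous; have [] := dH q0.
have cH1 (q : R) : 0 <= q -> {for q, continuous H1}.
  by move=> q0; apply: derivable1_continuous; have [] := dH1 q0.
split; [by apply: continuous_sqdist_comp; exact: cH | split; [|split; [|split]]].
- by move=> i x; have [] := radial_partial x i.
- move=> i; rewrite (_ : (fun y => _) = cst 2 * (H1 \o sqdist z) * (fun y => y 0 i - z 0 i)).
    move=> x; apply: continuousM; last exact: continuous_coordB.
    by apply: continuousM; [exact: cst_continuous | apply: continuous_sqdist_comp; exact: cH1].
  by apply: funext => y; rewrite radial_partialE.
- by move=> i j x; have [] := radial_partial2 x i j.
- move=> i j; rewrite (_ : (fun y => _) = cst 2 * ((H2 \o sqdist z) * (cst 2 *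
      (fun y => y 0 j - z 0 j)) * (fun y => y 0 i - z 0 i) + (H1 \o sqdist z) * cst (i == j)%:R)).
    move=> x; apply: continuousM; first exact: cst_continuous.
    apply: continuousD; last first.
      by apply: continuousM; [apply: continuous_sqdist_comp; exact: cH1 | exact: cst_continuous].
    apply: continuousM; last exact: continuous_coordB.
    apply: continuousM; first by apply: continuous_sqdist_comp; exact: cH2.
    by apply: continuousM; [exact: cst_continuous | exact: continuous_coordB].
  by apply: funext => y; rewrite radial_partial2E.
Qed.

Lemma radial_gradient x : gradient radial x = (2 * H1 (sqdist z x)) *: (x - z).
Proof. by apply/rowP => i; rewrite !mxE radial_partialE. Qed.

Lemma radial_hessian x :
  hessian radial x = (2 * H1 (sqdist z x)) *: 1%:M
                     + (4 * H2 (sqdist z x)) *: ((x - z)^T *m (x - z)).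
Proof.
apply/matrixP => i j; rewrite !mxE radial_partial2E big_ord1 !mxE.
by case: (i =P j) => [->|/eqP nij]; rewrite ?eqxx ?(negbTE nij) /=; ring.
Qed.

End Radial.

Section QuadraticForm.
Variables (R : realType) (N : nat).
Implicit Types (u w : 'rV[R]_N) (P Q X : 'M[R]_N).

Definition qform w Q := (w *m Q *m w^T) 0 0.

Lemma qformD w P Q : qform w (P + Q) = qform w P + qform w Q.
Proof. by rewrite /qform mulmxDr mulmxDl mxE. Qed.

Lemma qformZ w (a : R) Q : qform w (a *: Q) = a * qform w Q.
Proof. by rewrite /qform -scalemxAr -scalemxAl mxE. Qed.

Lemma qformN w Q : qform w (- Q) = - qform w Q.
Proof. by rewrite -scaleN1r qformZ mulN1r. Qed.

Lemma mulmx_trE u w : (u *m w^T) 0 0 = dotv u w.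
Proof. by rewrite mxE; apply: eq_bigr => k _; rewrite mxE. Qed.

Lemma qform1 w : qform w 1%:M = dotv w w.
Proof. by rewrite /qform mulmx1 mulmx_trE. Qed.

Lemma qform_outer w u : qform w (u^T *m u) = dotv w u ^+ 2.
Proof. by rewrite /qform !mulmxA -mulmxA mxE big_ord1 !mulmx_trE dotvC expr2. Qed.

Lemma mxtrace_outer u : \tr (u^T *m u) = dotv u u.
Proof. by apply: eq_bigr => i _; rewrite mxE big_ord1 mxE. Qed.

Lemma symmxD P Q : symmx P -> symmx Q -> symmx (P + Q).
Proof. by rewrite /symmx raddfD /= => -> ->. Qed.

Lemma symmxN Q : symmx Q -> symmx (- Q).
Proof. by rewrite /symmx raddfN /= => ->. Qed.

Lemma symmxZ (a : R) Q : symmx Q -> symmx (a *: Q).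
Proof. by rewrite /symmx linearZ /= => ->. Qed.

Lemma symmx1 : symmx (1%:M : 'M[R]_N).
Proof. exact: trmx1. Qed.

Lemma symmx_outer u : symmx (u^T *m u).
Proof. by rewrite /symmx trmx_mul trmxK. Qed.

Lemma psdmx_outer (a : R) u : 0 <= a -> psdmx (a *: (u^T *m u)).
Proof. by move=> a0 w; rewrite -/(qform w _) qformZ qform_outer mulr_ge0 ?sqr_ge0. Qed.

Lemma psdmx_scalar (a : R) : 0 <= a -> psdmx (a *: (1%:M : 'M[R]_N)).
Proof. by move=> a0 w; rewrite -/(qform w _) qformZ qform1 mulr_ge0 ?dotvv_ge0. Qed.

Lemma psdmx_proj (a : R) u : 0 <= a -> 0 < dotv u u ->
  psdmx (a *: (1%:M - (dotv u u)^-1 *: (u^T *m u))).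
Proof.
move=> a0 uu0 w; rewrite -/(qform w _) qformZ qformD qformN qformZ qform1 qform_outer.
rewrite mulr_ge0 // subr_ge0 ler_pdivrMl // mulrC -!enorm_sqr -exprMn.
by rewrite -real_normK ?num_real // lerXn2r ?nnegrE ?mulr_ge0 ?enorm_ge0 ?ler_norm_dotv.
Qed.

End QuadraticForm.

Section UniformEllipticity.
Variables (R : realType) (N : nat) (F : 'rV[R]_N -> R -> 'rV[R]_N -> 'M[R]_N -> R).
Variables (lam Lam : R).
Hypothesis ellipticF : forall x t p (X Q : 'M[R]_N), symmx X -> symmx Q -> psdmx Q ->
  lam * \tr Q <= F x t p X - F x t p (X + Q) /\ F x t p X - F x t p (X + Q) <= Lam * \tr Q.

Lemma elliptic_leB x t p X1 X2 : symmx X1 -> symmx X2 -> psdmx X1 -> psdmx X2 ->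
  F x t p (X1 - X2) <= F x t p 0 - lam * \tr X1 + Lam * \tr X2.
Proof.
move=> sX1 sX2 pX1 pX2.
have [_] := ellipticF x t p (symmxD sX1 (symmxN sX2)) sX2 pX2.
have [+ _] := ellipticF x t p (trmx0 _ _ _ : symmx 0) sX1 pX1.
rewrite subrK add0r; lra.
Qed.

Lemma elliptic_radial_le x t p u (a b : R) : a <= 0 -> 0 <= b ->
  F x t p (a *: 1%:M + b *: (u^T *m u)) <=
    F x t p 0 - lam * (b * dotv u u) - Lam * (a * N%:R).
Proof.
move=> a_le0 b_ge0; have na : 0 <= - a by rewrite oppr_ge0.
have -> : a *: 1%:M + b *: (u^T *m u) = b *: (u^T *m u) - (- a) *: 1%:M.
  by rewrite scaleNr opprK addrC.
apply: le_trans (elliptic_leB x t p (symmxZ _ (symmx_outer u)) (symmxZ _ (symmx1 R N))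
  (psdmx_outer u b_ge0) (@psdmx_scalar R N _ na)) _.
by rewrite !mxtraceZ mxtrace_outer mxtrace1 mulNr mulrN.
Qed.

Lemma elliptic_radial_le_proj x t p u (a b : R) :
  0 < dotv u u -> a <= 0 -> 0 <= b * dotv u u + a ->
  F x t p (a *: 1%:M + b *: (u^T *m u)) <=
    F x t p 0 - lam * (b * dotv u u + a) - Lam * (a * (N%:R - 1)).
Proof.
move=> uu0 a_le0 ba_ge0; set q := dotv u u; have na : 0 <= - a by rewrite oppr_ge0.
have -> : a *: 1%:M + b *: (u^T *m u) =
    (b + a / q) *: (u^T *m u) - (- a) *: (1%:M - q^-1 *: (u^T *m u)).
  by apply/matrixP => i j; rewrite !mxE; field; rewrite gt_eqF.
have pX1 : psdmx ((b + a / q) *: (u^T *m u)).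
  by apply: psdmx_outer; rewrite -(pmulr_lge0 _ uu0) mulrDl divfK ?gt_eqF.
have sX2 : symmx (- a *: (1%:M - q^-1 *: (u^T *m u))).
  by apply/symmxZ/symmxD; [exact: symmx1 R N | exact/symmxN/symmxZ/symmx_outer].
apply: le_trans (elliptic_leB x t p (symmxZ _ (symmx_outer u)) sX2
  pX1 (psdmx_proj na uu0)) _.
rewrite !mxtraceZ raddfB /= mxtraceZ mxtrace_outer mxtrace1 -/q mulVf ?gt_eqF //.
by rewrite mulrDl divfK ?gt_eqF // mulNr mulrN.
Qed.

End UniformEllipticity.

Lemma lsc_compact_min (R : realType) (T : ptopologicalType) (f : T -> R) (A : set T) :
  (forall x (e : R), 0 < e -> \forall y \near x, f x - e < f y) ->
  compact A -> A !=set0 -> exists2 x, A x & forall y, A y -> f x <= f y.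
Proof.
move=> lsc_f + [a Aa]; rewrite compact_cover => coverA.
(* Otherwise the open sets [r < f] for r in [f @` A] cover [A]; the least level of a
   finite subcover is a value of [f] on [A] that no set of the subcover contains. *)
apply: contrapT => nomin.
have opn r : (f @` A) r -> open [set x | r < f x].
  move=> _; rewrite openE => x /= rx.
  have := lsc_f x (f x - r); rewrite subr_gt0 => /(_ rx).
  by apply: filterS => y /=; rewrite opprB addrC subrK.
have covA : A `<=` cover (f @` A) (fun r => [set x | r < f x]).
  move=> x Ax; apply: contrapT => nocov; apply: nomin; exists x => // y Ay.
  by rewrite leNgt; apply/negP => yx; apply: nocov; exists (f y) => //; exists y.
have [D' D'f cov] := coverA R _ _ opn covA.
pose r0 := \big[Order.min/f a]_(r <- finmap.enum_fset D') r.
have [t At ftr0] : (f @` A) r0.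
  rewrite /r0 big_seq; elim/big_ind: _ => [|r1 r2 r1A r2A|r /D'f /set_mem //]; first by exists a.
  by rewrite /Order.min; case: ifP.
have [r /= rD' rlt] := cov t At.
have : r0 <= r by exact: ge_bigmin_seq.
by rewrite -ftr0 leNgt rlt.
Qed.

Section Annulus.
Variables (R : realType) (N : nat).
Implicit Types (x y z : 'rV[R]_N) (f g v : 'rV[R]_N -> R).

Lemma lscB v g : lsc v -> continuous g -> lsc (fun x => v x - g x).
Proof.
move=> lsc_v cg x e e0; have e2 : 0 < e / 2 by rewrite divr_gt0.
have : \forall y \near x, g y < g x + e / 2.
  apply: (cg x [set r | r < g x + e / 2]); apply: open_nbhs_nbhs.
  by split; [exact: open_lt | rewrite /= ltrDl].
by apply: filterS2 (lsc_v x _ e2) => y; lra.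
Qed.

Lemma lsc_closed_le v (m : R) : lsc v -> closed [set x | v x <= m].
Proof.
move=> lsc_v; rewrite closedE => x nx /=; rewrite leNgt; apply/negP => mx; apply: nx.
have := lsc_v x (v x - m); rewrite subr_gt0 => /(_ mx).
by apply: filterS => y /=; rewrite opprB addrC subrK => my; apply/negP; rewrite -ltNge.
Qed.

Definition annulus z (a b : R) := [set x | a <= enorm (x - z) /\ enorm (x - z) <= b].

Lemma compact_annulus z a b : compact (annulus z a b).
Proof.
apply: bounded_closed_compact; last first.
  rewrite (_ : annulus z a b =
    (fun x => enorm (x - z)) @^-1` ([set r | a <= r] `&` [set r | r <= b])) //.
  apply: preimage_closed => [x _|]; first exact: continuous_enormB.
  by apply: closedI; [exact: closed_ge | exact: closed_le].
exists (b + enorm z); split; first exact: num_real.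
move=> M bM x [_ xb] /=; change (mx_norm x <= M); rewrite mx_normrE.
have xM : enorm x <= M.
  apply: ltW; apply: le_lt_trans bM; have := enormD (x - z) z; rewrite subrK; lra.
apply: bigmax_le => [|[i j] _ /=]; first exact: le_trans (enorm_ge0 x) xM.
by rewrite (ord1 i); exact: le_trans (ler_coord_enorm x j) xM.
Qed.

Lemma nbhs_enormB_gt z x (a : R) : a < enorm (x - z) -> \forall y \near x, a < enorm (y - z).
Proof.
move=> ax; have := @continuous_enormB R N z x [set r | a < r]; apply.
by apply: open_nbhs_nbhs; split; [exact: open_gt|].
Qed.

Lemma nbhs_enormB_lt z x (a : R) : enorm (x - z) < a -> \forall y \near x, enorm (y - z) < a.
Proof.
move=> xa; have := @continuous_enormB R N z x [set r | r < a]; apply.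
by apply: open_nbhs_nbhs; split; [exact: open_lt|].
Qed.

Lemma annulus_local_min f z a b x :
  a < enorm (x - z) -> enorm (x - z) < b ->
  (forall y, annulus z a b y -> f x <= f y) -> local_min f x.
Proof.
move=> ax xb xmin; apply: filterS2 (nbhs_enormB_gt ax) (nbhs_enormB_lt xb) => y ay yb.
by apply: xmin; split; apply: ltW.
Qed.

Lemma lsc_annulus_neg_local_min f z a b x :
  lsc f -> annulus z a b x -> f x < 0 ->
  (forall y, enorm (y - z) = a -> 0 <= f y) -> (forall y, enorm (y - z) = b -> 0 <= f y) ->
  exists x0, [/\ a < enorm (x0 - z), enorm (x0 - z) < b, f x0 < 0 & local_min f x0].
Proof.
move=> lsc_f Ax fx_lt0 f_inner f_outer.
have [x0 [ax0 x0b] x0min] :=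
  lsc_compact_min lsc_f (@compact_annulus z a b) (ex_intro _ x Ax).
have fx0_lt0 : f x0 < 0 by apply: le_lt_trans (x0min x Ax) fx_lt0.
have ax0' : a < enorm (x0 - z).
  by rewrite lt_def ax0 andbT; apply/eqP => ea; move: (f_inner x0 ea); lra.
have x0b' : enorm (x0 - z) < b.
  by rewrite lt_def x0b andbT; apply/eqP => /esym eb; move: (f_outer x0 eb); lra.
by exists x0; split => //; exact: annulus_local_min x0min.
Qed.

Lemma lsc_annulus_local_min f z a b x1 :
  lsc f -> a < b -> enorm (x1 - z) = b -> f x1 = 0 ->
  (forall y, enorm (y - z) = a -> 0 <= f y) -> (forall y, b <= enorm (y - z) -> 0 <= f y) ->
  exists2 x0, a <= enorm (x0 - z) <= b & local_min f x0.
Proof.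
move=> lsc_f ab x1b fx1 f_inner f_outer.
have [[y Ay fy_lt0]|f_ge0] := pselect (exists2 y, annulus z a b y & f y < 0).
  have f_sphere t : enorm (t - z) = b -> 0 <= f t by move=> tb; apply: f_outer; rewrite tb.
  have [x0 [ax0 x0b _ x0min]] := lsc_annulus_neg_local_min lsc_f Ay fy_lt0 f_inner f_sphere.
  by exists x0; rewrite ?ltW.
exists x1; first by rewrite x1b (ltW ab) lexx.
have : a < enorm (x1 - z) by rewrite x1b.
move/nbhs_enormB_gt; apply: filterS => y ay; rewrite fx1.
have [yb|/ltW/f_outer //] := leP (enorm (y - z)) b.
by rewrite leNgt; apply/negP => fy; apply: f_ge0; exists y => //; split; rewrite ?(ltW ay).
Qed.

Lemma lsc_closest_sublevel f y x (m : R) : lsc f -> f x <= m -> m < f y ->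
  exists x1, [/\ f x1 <= m, 0 < enorm (x1 - y)
                & forall x, enorm (x - y) < enorm (x1 - y) -> m < f x].
Proof.
move=> lsc_f fxm mfy; set S := annulus y 0 (enorm (x - y)) `&` [set x | f x <= m].
have cS : compact S by apply: compact_closedI; [exact: compact_annulus | exact: lsc_closed_le].
have Sx : S x by split => //; split; rewrite ?enorm_ge0.
have [x1 /[!inE] -[[_ x1x] fx1m] x1min] :=
  EVT_min_rV (ex_intro _ x Sx) cS (continuous_subspaceT (@continuous_enormB R N y)).
exists x1; split => //.
  rewrite lt_def enorm_ge0 andbT; apply/eqP => /enorm_eq0/eqP; rewrite subr_eq0 => /eqP ex1.
  by move: mfy; rewrite -ex1 ltNge fx1m.
move=> t tx1; rewrite ltNge; apply/negP => ftm.
have St : S t by split => //; split; rewrite ?enorm_ge0 // (le_trans (ltW tx1) x1x).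
by move: (x1min t); rewrite inE leNgt tx1 => /(_ St).
Qed.

End Annulus.

Section Profiles.
Variable R : realType.
Implicit Types (f : R -> R) (q df k m e c : R).

Lemma is_derive_affine f q df m e c : is_derive q 1 f df ->
  is_derive q 1 (fun y => m + e * (f y - c)) (e * df).
Proof.
move=> fd; have := is_deriveD (is_derive_cst m q 1)
  (is_deriveZ e (is_deriveB fd (is_derive_cst c q 1))).
by rewrite add0r subr0.
Qed.

Definition shift_inv q := (q + 1)^-1.

Lemma is_derive_succ q : is_derive q 1 (fun y : R => y + 1) 1.
Proof. by have := is_deriveD (is_derive_id q 1) (is_derive_cst (1 : R) q 1); rewrite addr0. Qed.

(* [log_profile (|x| ^+ 2)] behaves like [- ln |x|]. *)
Definition log_profile q := - (1/2) * ln (q + 1) + shift_inv q.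
Definition log_profile1 q := - (1/2) * shift_inv q - shift_inv q ^+ 2.
Definition log_profile2 q := (1/2) * shift_inv q ^+ 2 + 2 * shift_inv q ^+ 3.

Lemma is_derive_shift_inv q : 0 <= q -> is_derive q 1 shift_inv (- shift_inv q ^+ 2).
Proof.
move=> q0; have q1 : q + 1 != 0 by rewrite gt_eqF //; lra.
have := @is_deriveV _ (fun y => y + 1) q 1 1 q1 (is_derive_succ q).
by move/is_derive_eq; apply; rewrite /shift_inv exprVn /GRing.scale /= mulr1.
Qed.

Lemma is_derive_log_profile q : 0 <= q -> is_derive q 1 log_profile (log_profile1 q).
Proof.
move=> q0; have q1 : 0 < q + 1 by lra.
have dln := @is_derive1_comp _ (@ln R) (fun y => y + 1) q _ _ (is_derive1_ln q1) (is_derive_succ q).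
have := is_deriveD (is_deriveZ (- (1/2)) dln) (is_derive_shift_inv q0).
by move/is_derive_eq; apply; rewrite /log_profile1 /shift_inv mulr1.
Qed.

Lemma is_derive_log_profile1 q : 0 <= q -> is_derive q 1 log_profile1 (log_profile2 q).
Proof.
move=> q0; have ds := is_derive_shift_inv q0.
have := is_deriveB (is_deriveZ (- (1/2)) ds) (is_deriveX 2 ds).
move/is_derive_eq; apply; rewrite /log_profile2 /GRing.scale /=; ring.
Qed.

Lemma C2_profile_log m e c :
  C2_profile (fun q => m + e * (log_profile q - c)) (fun q => e * log_profile1 q)
             (fun q => e * log_profile2 q).
Proof.
split=> q q0; first exact/is_derive_affine/is_derive_log_profile.
  exact/is_deriveZ/is_derive_log_profile1.
have ds := is_derive_shift_inv q0.
have [d2 _] := is_deriveZ e (is_deriveD (is_deriveZ (1/2) (is_deriveX 2 ds))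
                                     (is_deriveZ 2 (is_deriveX 3 ds))).
exact: derivable1_continuous d2.
Qed.

Definition hopf_profile k q := expR (- k * q).

Lemma is_derive_hopf_profile k q : is_derive q 1 (hopf_profile k) (- k * hopf_profile k q).
Proof.
have := is_derive1_comp (is_derive_expR (- k * q)) (is_deriveZ (- k) (is_derive_id q 1)).
by move/is_derive_eq; apply; rewrite /GRing.scale /= mulr1 mulrC.
Qed.

Lemma is_derive_hopf_profile1 k q :
  is_derive q 1 (fun y => - k * hopf_profile k y) (k ^+ 2 * hopf_profile k q).
Proof.
have := is_deriveZ (- k) (is_derive_hopf_profile k q).
by move/is_derive_eq; apply; rewrite /GRing.scale /=; ring.
Qed.

Lemma C2_profile_hopf m e k c :
  C2_profile (fun q => m + e * (hopf_profile k q - c)) (fun q => e * (- k * hopf_profile k q))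
             (fun q => e * (k ^+ 2 * hopf_profile k q)).
Proof.
split=> q _; first exact/is_derive_affine/is_derive_hopf_profile.
  exact/is_deriveZ/is_derive_hopf_profile1.
have [d2 _] := is_deriveZ e (is_deriveZ (k ^+ 2) (is_derive_hopf_profile k q)).
exact: derivable1_continuous d2.
Qed.

Lemma log_profile_signs q : 3 < q ->
  [/\ log_profile1 q < 0, 0 <= 2 * q * log_profile2 q + log_profile1 q
    & 0 < q * log_profile2 q + log_profile1 q].
Proof.
move=> q3; rewrite /log_profile1 /log_profile2; set s := shift_inv q.
have s0 : 0 < s by rewrite invr_gt0; lra.
have qs : q * s = 1 - s by rewrite /s /shift_inv; field; rewrite gt_eqF //; lra.
have s4 : s < 1/4 by nra.
have e : q * (1/2 * s ^+ 2 + 2 * s ^+ 3) = (1 - s) * (1/2 * s + 2 * s ^+ 2).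
  by rewrite -qs; ring.
by rewrite -mulrA e; split; nra.
Qed.

Lemma log_profile_sqr_le r : 1 <= r -> log_profile (r ^+ 2) <= - ln r + 1.
Proof.
move=> r1; have r0 : 0 < r by lra.
have : ln (r ^+ 2) <= ln (r ^+ 2 + 1) by rewrite ler_ln ?posrE ?exprn_gt0 //; nra.
have : shift_inv (r ^+ 2) <= 1 by rewrite invf_le1 ?sqr_ge0 //; nra.
by rewrite /log_profile lnXn // -mulr_natl; lra.
Qed.

Lemma log_profile_ge q : 0 <= q -> - log_profile q <= (1/2) * ln (q + 1).
Proof.
move=> q0; have : 0 < shift_inv q by rewrite invr_gt0; lra.
by rewrite /log_profile; lra.
Qed.

Lemma log_profile_reaction_le r : 1 <= r ->
  log_profile (r ^+ 2) - 2 * log_profile1 (r ^+ 2) * r ^+ 2 * ln r <= 3.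
Proof.
move=> r1; have := log_profile_sqr_le r1.
rewrite /log_profile1; set q := r ^+ 2; set s := shift_inv q.
have s0 : 0 < s by rewrite invr_gt0 /q; nra.
have qs : q * s = 1 - s by rewrite /s /shift_inv; field; rewrite gt_eqF // /q; nra.
have lr0 : 0 <= ln r by exact: ln_ge0.
have lrr : ln r < r by apply: ln_sublinear; lra.
have rs : r * s <= 1.
  have : s * (q + 1) = 1 by rewrite mulVf // gt_eqF // /q; nra.
  rewrite /q; nra.
have -> : 2 * (- (1/2) * s - s ^+ 2) * q * ln r = - ((q * s) * ln r + 2 * s * (q * s) * ln r).
  by field.
rewrite qs; nra.
Qed.

Lemma hopf_exponent_large (K rho r lam Lam n : R) :
  0 <= K -> 0 < rho -> rho / 2 <= r -> 0 <= Lam -> 0 < lam -> 0 <= n ->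
  K * r + Lam * n < 2 * lam * ((2 * K / rho + 4 * Lam * n / rho ^+ 2 + 1) / lam) * r ^+ 2.
Proof.
move=> K0 rho0 rr Lam0 lam0 n0; have r0 : 0 < r by lra.
have -> : 2 * lam * ((2 * K / rho + 4 * Lam * n / rho ^+ 2 + 1) / lam) * r ^+ 2 =
   2 * (K * r * (2 * r / rho)) + 2 * (Lam * n * (2 * r / rho) ^+ 2) + 2 * r ^+ 2.
  by field; rewrite ?gt_eqF.
have h1 : 1 <= 2 * r / rho by rewrite ler_pdivlMr //; lra.
have h2 : 1 <= (2 * r / rho) ^+ 2 by rewrite expr_ge1 //; lra.
have : K * r <= K * r * (2 * r / rho) by rewrite ler_peMr // mulr_ge0 //; lra.
have : Lam * n <= Lam * n * (2 * r / rho) ^+ 2 by rewrite ler_peMr // mulr_ge0.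
nra.
Qed.

Lemma exists_small_weight (d P C m : R) : 0 < d -> 0 < C ->
  exists2 e, 0 < e & e * (`|P| + 1) <= d /\ (m < 0 -> e * C <= - m).
Proof.
move=> d_gt0 C_gt0; have P1_gt0 : 0 < `|P| + 1 by rewrite ltr_pwDr.
exists (Num.min (d / (`|P| + 1)) (if m < 0 then - m / C else 1)).
  by rewrite lt_min divr_gt0 //=; case: ifP => // m_lt0; rewrite divr_gt0 // oppr_gt0.
split; first by rewrite -ler_pdivlMr // ge_min lexx.
by move=> m_lt0; rewrite -ler_pdivlMr // ge_min m_lt0 lexx orbT.
Qed.

End Profiles.

Definition log_barrier (R : realType) (N : nat) (m e R1 : R) : 'rV[R]_N -> R :=
  radial 0 (fun q => m + e * (log_profile q - log_profile (R1 ^+ 2))).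

Section LogBarrier.
Variables (R : realType) (N : nat) (m e R1 : R).

Lemma log_barrierE (x : 'rV[R]_N) :
  log_barrier m e R1 x = m + e * (log_profile (enorm x ^+ 2) - log_profile (R1 ^+ 2)).
Proof. by rewrite /log_barrier /radial sqdistE subr0. Qed.

Lemma log_barrier_sphere (x : 'rV[R]_N) : enorm x = R1 -> log_barrier m e R1 x = m.
Proof. by rewrite log_barrierE => ->; rewrite subrr mulr0 addr0. Qed.

Lemma log_barrier_le (x : 'rV[R]_N) : 0 <= e -> 0 <= R1 -> 1 <= enorm x ->
  log_barrier m e R1 x <= m + e * (- ln (enorm x) + 1 + 1/2 * ln (R1 ^+ 2 + 1)).
Proof.
move=> e_ge0 R1_ge0 x_ge1; rewrite log_barrierE lerD2l ler_wpM2l //.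
have := log_profile_sqr_le x_ge1; have := log_profile_ge (sqr_ge0 R1); lra.
Qed.

End LogBarrier.

Section Liouville.
Variables (R : realType) (N : nat) (F : 'rV[R]_N -> R -> 'rV[R]_N -> 'M[R]_N -> R).
Variables (lam Lam : R) (A : pseudoMetricType R).
Variables (b : 'rV[R]_N -> A -> 'rV[R]_N) (c : 'rV[R]_N -> A -> R) (Ro : R) (v : 'rV[R]_N -> R).
Hypothesis lam_gt0 : 0 < lam.
Hypothesis lam_le_Lam : lam <= Lam.
Hypothesis ellipticF : forall x t p (X Q : 'M[R]_N), symmx X -> symmx Q -> psdmx Q ->
  lam * \tr Q <= F x t p X - F x t p (X + Q) /\ F x t p X - F x t p (X + Q) <= Lam * \tr Q.
Hypothesis b_locally_bounded : forall r : R, 0 < r ->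
  exists K : R, forall x a, enorm x <= r -> enorm (b x a) <= K.
Hypothesis c_ge0 : forall x a, 0 <= c x a.
Hypothesis growth : forall x, Ro <= enorm x ->
  (ereal_sup [set (dotv (b x a) x - c x a * enorm x ^+ 2 * ln (enorm x))%:E | a in [set: A]]
     <= (lam - (N%:R - 1) * Lam)%:E)%E.
Hypothesis structureF : forall x t p,
  ((F x t p 0)%:E <= ereal_sup [set (c x a * t - dotv (b x a) p)%:E | a in [set: A]])%E.
Hypothesis supersol : visc_supersol F v.
Hypothesis v_log_liminf : forall e : R, 0 < e -> exists r : R,
  forall x, r < enorm x -> - e <= v x / ln (enorm x).
Hypothesis reaction : (forall x a, c x a = 0) \/ (forall x, v x <= 0).

Let lsc_v : lsc v. Proof. by case: supersol. Qed.

Lemma F0_le_sup x t p B : (forall a, c x a * t - dotv (b x a) p <= B) -> F x t p 0 <= B.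
Proof.
move=> B_ub; rewrite -lee_fin; apply: le_trans (structureF x t p) _.
by apply: ge_ereal_sup => _ [a _ <-]; rewrite lee_fin.
Qed.

Lemma drift_le_growth x a : Ro <= enorm x ->
  dotv (b x a) x <= lam - (N%:R - 1) * Lam + c x a * enorm x ^+ 2 * ln (enorm x).
Proof.
move=> Rox; rewrite -lerBlDr -lee_fin; apply: le_trans (growth Rox).
by apply: ereal_sup_ubound; exists a.
Qed.

Lemma reaction_le0 x a : c x a * v x <= 0.
Proof. by case: reaction => [-> | v_le0]; rewrite ?mul0r // mulr_ge0_le0. Qed.

Lemma supersol_radial z H H1 H2 x0 : C2_profile H H1 H2 ->
  local_min (fun y => v y - radial z H y) x0 ->
  0 <= F x0 (v x0) ((2 * H1 (sqdist z x0)) *: (x0 - z))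
         ((2 * H1 (sqdist z x0)) *: 1%:M + (4 * H2 (sqdist z x0)) *: ((x0 - z)^T *m (x0 - z))).
Proof.
move=> C2H x0min; have [_ test] := supersol.
rewrite -(radial_gradient _ C2H) -(radial_hessian _ C2H).
exact: test (radial_C2 _ C2H) x0min.
Qed.

Lemma log_barrier_strict e x0 t : 0 < e -> 2 < enorm x0 -> Ro <= enorm x0 ->
  (forall a, c x0 a * t <=
     c x0 a * (2 * (e * log_profile1 (dotv x0 x0)) * dotv x0 x0 * ln (enorm x0))) ->
  F x0 t ((2 * (e * log_profile1 (dotv x0 x0))) *: x0)
    ((2 * (e * log_profile1 (dotv x0 x0))) *: 1%:M
     + (4 * (e * log_profile2 (dotv x0 x0))) *: (x0^T *m x0)) < 0.
Proof.
move=> e_gt0 x0_gt2 Ro_x0 ct.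
set q := dotv x0 x0; set al := 2 * (e * log_profile1 q).
have qr : q = enorm x0 ^+ 2 by rewrite enorm_sqr.
have q3 : 3 < q by rewrite qr; nra.
have [G1_lt0 G_ge0 G_gt0] := log_profile_signs q3.
have al_le0 : al <= 0 by rewrite /al; nra.
have nal_ge0 : 0 <= - al by rewrite oppr_ge0.
apply: le_lt_trans (elliptic_radial_le_proj ellipticF _ _ _ (_ : 0 < q) al_le0 _) _.
- by rewrite qr; nra.
- by have := mulr_ge0 (ltW e_gt0) G_ge0; rewrite -/q /al; lra.
have F0 : F x0 t (al *: x0) 0 <= - al * (lam - (N%:R - 1) * Lam).
  apply: F0_le_sup => a; rewrite dotvZr.
  have := ler_wpM2l nal_ge0 (drift_le_growth a Ro_x0).
  by have := ct a; rewrite -/q -qr -/al; nra.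
have := mulr_gt0 lam_gt0 (mulr_gt0 e_gt0 G_gt0); rewrite -/q /al in F0 *; nra.
Qed.

Lemma hopf_barrier_strict y x0 t (e k K : R) : 0 < e -> 0 < k ->
  (forall a, enorm (b x0 a) <= K) -> (forall a, c x0 a * t <= 0) ->
  K * enorm (x0 - y) + Lam * N%:R < 2 * lam * k * enorm (x0 - y) ^+ 2 ->
  F x0 t ((2 * (e * (- k * hopf_profile k (sqdist y x0)))) *: (x0 - y))
    ((2 * (e * (- k * hopf_profile k (sqdist y x0)))) *: 1%:M
     + (4 * (e * (k ^+ 2 * hopf_profile k (sqdist y x0)))) *: ((x0 - y)^T *m (x0 - y))) < 0.
Proof.
move=> e_gt0 k_gt0 bK ct k_large.
set u := x0 - y in k_large *; set w := hopf_profile k _; set r := enorm u in k_large *.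
have w_gt0 : 0 < w by exact: expR_gt0.
have ekw_gt0 : 0 < 2 * (e * (k * w)) by rewrite !mulr_gt0.
apply: le_lt_trans (elliptic_radial_le ellipticF _ _ _ u _ _) _.
- by rewrite mulNr mulrN mulrN oppr_le0 ltW.
- by rewrite !mulr_ge0 ?exprn_ge0 // ltW.
have F0 : F x0 t ((2 * (e * (- k * w))) *: u) 0 <= 2 * (e * (k * w)) * (K * r).
  apply: F0_le_sup => a; rewrite dotvZr.
  have : dotv (b x0 a) u <= K * r.
    by apply: le_trans (dotv_le_enorm _ _) (ler_wpM2r (enorm_ge0 u) (bK a)).
  by have := ct a; nra.
have : 0 < 2 * (e * (k * w)) * (2 * lam * k * r ^+ 2 - (K * r + Lam * N%:R)).
  by rewrite mulr_gt0 // subr_gt0.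
by rewrite /sqdist enorm_sqr in F0 *; nra.
Qed.

Lemma hopf_no_touch y x1 (m e rho : R) : 0 < rho -> 0 < e ->
  (forall x, m <= v x) -> v x1 = m -> enorm (x1 - y) = rho ->
  (forall x, enorm (x - y) <= rho / 2 -> m + e <= v x) -> False.
Proof.
move=> rho_gt0 e_gt0 m_le_v vx1 x1y v_inner.
have [K0 bK0] : exists K0, forall x a, enorm x <= enorm y + rho -> enorm (b x a) <= K0.
  by apply: b_locally_bounded; rewrite ltr_wpDl ?enorm_ge0.
set K := `|K0|; set k := (2 * K / rho + 4 * Lam * N%:R / rho ^+ 2 + 1) / lam.
have Lam_ge0 : 0 <= Lam by apply: le_trans (ltW lam_gt0) lam_le_Lam.
have k_gt0 : 0 < k.
  have : 0 <= 2 * K / rho + 4 * Lam * N%:R / rho ^+ 2.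
    by rewrite addr_ge0 // divr_ge0 ?mulr_ge0 ?exprn_ge0 ?ler0n ?normr_ge0 ?(ltW rho_gt0).
  by move=> h; apply: divr_gt0 => //; lra.
pose c0 := hopf_profile k (rho ^+ 2).
have C2H := C2_profile_hopf m e k c0.
pose phi := radial y (fun q => m + e * (hopf_profile k q - c0)).
have phiE x : phi x = m + e * (hopf_profile k (enorm (x - y) ^+ 2) - c0).
  by rewrite /phi /radial sqdistE.
have cont_phi : continuous phi := (radial_C2 _ C2H).1.
have psi_x1 : v x1 - phi x1 = 0 by rewrite phiE x1y vx1 subrr mulr0 addr0 subrr.
have [xs /andP[xs_ge xs_le] xsmin] :
    exists2 xs, rho / 2 <= enorm (xs - y) <= rho & local_min (fun x => v x - phi x) xs.
  apply: (lsc_annulus_local_min (lscB lsc_v cont_phi) _ x1y psi_x1) => [|x xy|x xy].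
  - lra.
  - rewrite phiE xy subr_ge0.
    have : hopf_profile k ((rho / 2) ^+ 2) <= 1.
      by rewrite /hopf_profile expR_le1 mulNr oppr_le0 mulr_ge0 ?sqr_ge0 ?(ltW k_gt0).
    have : 0 < c0 by exact: expR_gt0.
    by have := v_inner x; rewrite xy lexx => /(_ isT); nra.
  - rewrite phiE subr_ge0.
    have : hopf_profile k (enorm (x - y) ^+ 2) <= c0.
      rewrite /c0 /hopf_profile ler_expR !mulNr lerN2 ler_wpM2l ?(ltW k_gt0) //.
      by rewrite lerXn2r ?nnegrE ?enorm_ge0 ?(ltW rho_gt0).
    by have := m_le_v x; nra.
have bK a : enorm (b xs a) <= K.
  apply: le_trans (bK0 xs a _) (ler_norm K0).
  by have := enormD (xs - y) y; rewrite subrK; lra.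
have := supersol_radial C2H xsmin; rewrite leNgt => /negP; apply.
apply: hopf_barrier_strict e_gt0 k_gt0 bK (reaction_le0 xs) _.
by apply: hopf_exponent_large; rewrite ?normr_ge0 ?ler0n.
Qed.

Lemma global_min_const xm : (forall x, v xm <= v x) -> forall y, v y = v xm.
Proof.
move=> xm_min y; apply: contrapT => vy_neq; set m := v xm.
have m_lt_vy : m < v y by rewrite lt_def xm_min andbT; apply/eqP.
have [x1 [vx1 rho_gt0 v_gt_m]] := lsc_closest_sublevel lsc_v (lexx m) m_lt_vy.
set rho := enorm (x1 - y) in rho_gt0 v_gt_m.
have ball_y : annulus y 0 (rho / 2) y by rewrite /annulus /= subrr enorm0 lexx divr_ge0 ?ltW.
have [xe [_ xe_y] xe_min] := lsc_compact_min (lscB lsc_v (@cst_continuous _ _ m))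
  (@compact_annulus R N y 0 (rho / 2)) (ex_intro _ y ball_y).
apply: (@hopf_no_touch y x1 m (v xe - m) rho) => //.
- by rewrite subr_gt0 v_gt_m //; lra.
- by apply: le_anti; rewrite vx1 xm_min.
- move=> x xy; have := xe_min x (conj (enorm_ge0 _) xy); lra.
Qed.

Lemma log_barrier_lt_far m e R1 M : 0 < e -> 0 <= R1 ->
  exists2 rho, M < rho & forall x, rho <= enorm x -> log_barrier m e R1 x < v x.
Proof.
move=> e_gt0 R1_ge0.
have [r0 v_ge] : exists r0, forall x, r0 < enorm x -> - (e / 2) <= v x / ln (enorm x).
  by apply: v_log_liminf; rewrite divr_gt0.
set L := 2 * (`|m| + e * (1 + 1/2 * ln (R1 ^+ 2 + 1))) / e.
set rho0 := Num.max (Num.max M r0) (Num.max (expR L) 1).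
exists (rho0 + 1) => [|x rx]; first by rewrite ltr_pwDr // !le_max lexx.
have : rho0 < enorm x by lra.
rewrite !gt_max => /andP[/andP[_ r0x] /andP[Lx x_gt1]].
have lnx_gt0 : 0 < ln (enorm x) by exact: ln_gt0.
have L_lt : L < ln (enorm x) by rewrite -[L]expRK ltr_ln ?posrE ?expR_gt0 //; lra.
have : - (e / 2) * ln (enorm x) <= v x by rewrite -ler_pdivlMr // v_ge.
have : 2 * (`|m| + e * (1 + 1/2 * ln (R1 ^+ 2 + 1))) < e * ln (enorm x).
  by rewrite -ltr_pdivrMl // mulrC.
have := log_barrier_le m (ltW e_gt0) R1_ge0 (ltW x_gt1); have := ler_norm m.
lra.
Qed.

Lemma log_barrier_no_touch m e R1 x0 : 0 < e -> 2 <= R1 -> Ro <= R1 -> R1 < enorm x0 ->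
  local_min (fun x => v x - log_barrier m e R1 x) x0 -> v x0 < log_barrier m e R1 x0 ->
  (forall x a, c x a = 0) \/ m + e * (3 + 1/2 * ln (R1 ^+ 2 + 1)) <= 0 -> False.
Proof.
move=> e_gt0 R1_ge2 Ro_R1 R1_x0 x0min vx0_lt reaction_small.
have := supersol_radial (C2_profile_log m e (log_profile (R1 ^+ 2))) x0min.
rewrite /sqdist !subr0 leNgt => /negP; apply.
apply: log_barrier_strict => //; [lra | lra | move=> a].
case: reaction_small => [-> | small]; first by rewrite !mul0r.
apply: ler_wpM2l; first exact: c_ge0.
rewrite log_barrierE in vx0_lt; rewrite -enorm_sqr; set r := enorm x0 in vx0_lt R1_x0 *.
have r_ge1 : 1 <= r by lra.
have := ler_wpM2l (ltW e_gt0) (log_profile_reaction_le r_ge1).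
have := ler_wpM2l (ltW e_gt0) (log_profile_ge (sqr_ge0 R1)).
lra.
Qed.

Lemma min_attained R1 : 2 <= R1 -> Ro <= R1 ->
  (forall x a, c x a = 0) \/ (exists2 x, enorm x <= R1 & v x < 0) ->
  exists xm, forall x, v xm <= v x.
Proof.
move=> R1_ge2 Ro_R1 c0_or_neg; have R1_ge0 : 0 <= R1 by lra.
have ball0 : annulus (0 : 'rV[R]_N) 0 R1 0 by split; rewrite subr0 enorm0.
have [xm _ xm_min] := lsc_compact_min lsc_v (@compact_annulus R N 0 0 R1) (ex_intro _ 0 ball0).
set m := v xm.
have m_le x : enorm x <= R1 -> m <= v x.
  by move=> xR1; apply: xm_min; split; rewrite subr0 ?enorm_ge0.
exists xm => x; have [|R1_x] := leP (enorm x) R1; first exact: m_le.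
rewrite leNgt; apply/negP => vx_lt_m.
set C := 3 + 1/2 * ln (R1 ^+ 2 + 1).
have C_gt0 : 0 < C.
  have : 0 <= ln (R1 ^+ 2 + 1) by apply: ln_ge0; rewrite lerDr sqr_ge0.
  rewrite /C; lra.
set Phi := log_profile (enorm x ^+ 2) - log_profile (R1 ^+ 2).
have d_gt0 : 0 < m - v x by rewrite subr_gt0.
have [e e_gt0 [e_Phi e_C]] := exists_small_weight Phi m d_gt0 C_gt0.
have vx_lt : v x < log_barrier m e R1 x.
  have := ler_wpM2l (ltW e_gt0) (lerNnormlW (lexx `|Phi|)).
  by rewrite log_barrierE -/Phi; lra.
have small : (forall x a, c x a = 0) \/ m + e * C <= 0.
  case: c0_or_neg => [|[x' x'R1 vx'_lt0]]; [by left | right].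
  by have := e_C (le_lt_trans (m_le x' x'R1) vx'_lt0); lra.
have cont : continuous (log_barrier m e R1 : 'rV[R]_N -> R).
  exact: (radial_C2 _ (C2_profile_log m e _)).1.
have [rho x_rho far] := @log_barrier_lt_far m e R1 (enorm x) e_gt0 R1_ge0.
have x_ann : annulus 0 R1 rho x by rewrite /annulus /= subr0 !ltW.
have psi_x : v x - log_barrier m e R1 x < 0 by rewrite subr_lt0.
have inner y : enorm (y - 0) = R1 -> 0 <= v y - log_barrier m e R1 y.
  by rewrite subr0 subr_ge0 => yR1; rewrite log_barrier_sphere // m_le // yR1.
have outer y : enorm (y - 0) = rho -> 0 <= v y - log_barrier m e R1 y.
  by rewrite subr0 subr_ge0 => yrho; apply/ltW/far; rewrite yrho.
have [x0 [R1_x0 x0_rho vx0_lt x0min]] :=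
  lsc_annulus_neg_local_min (lscB lsc_v cont) x_ann psi_x inner outer.
rewrite subr0 in R1_x0; rewrite subr_lt0 in vx0_lt.
exact: log_barrier_no_touch e_gt0 R1_ge2 Ro_R1 R1_x0 x0min vx0_lt small.
Qed.

Lemma liouville_const : exists k, forall x, v x = k.
Proof.
have R1_ge2 : 2 <= Num.max 2 Ro by rewrite le_max lexx.
have Ro_R1 : Ro <= Num.max 2 Ro by rewrite le_max lexx orbT.
have min_const R1 : 2 <= R1 -> Ro <= R1 ->
    (forall x a, c x a = 0) \/ (exists2 x, enorm x <= R1 & v x < 0) -> exists k, forall x, v x = k.
  by move=> ? ? /min_attained [] // xm xm_min; exists (v xm); exact: global_min_const.
case: reaction => [c0|v_le0]; first exact: (min_const _ R1_ge2 Ro_R1 (or_introl c0)).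
have [[x' vx'_lt0]|v_ge0] := pselect (exists x, v x < 0); last first.
  exists 0 => x; apply/le_anti; rewrite v_le0 leNgt; apply/negP => vx_lt0.
  by apply: v_ge0; exists x.
apply: (min_const (Num.max (Num.max 2 Ro) (enorm x'))).
- by rewrite le_max R1_ge2.
- by rewrite le_max Ro_R1.
- by right; exists x' => //; rewrite le_max lexx orbT.
Qed.

End Liouville.

Theorem corollary3p2 (R : realType) (N : nat)
  (F : 'rV[R]_N -> R -> 'rV[R]_N -> 'M[R]_N -> R)
  (lam Lam : R)
  (A : pseudoMetricType R)
  (b : 'rV[R]_N -> A -> 'rV[R]_N) (c : 'rV[R]_N -> A -> R)
  (Ro : R) (v : 'rV[R]_N -> R) :
  (* F continuous on R^N x R x R^N x S^N *)
  {within [set z : 'rV[R]_N * R * 'rV[R]_N * 'M[R]_N | symmx z.2],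
     continuous (fun z => F z.1.1.1 z.1.1.2 z.1.2 z.2)} ->
  (* uniform ellipticity *)
  0 < lam -> lam <= Lam ->
  (forall x t p (X Q : 'M[R]_N), symmx X -> symmx Q -> psdmx Q ->
     lam * \tr Q <= F x t p X - F x t p (X + Q) /\
     F x t p X - F x t p (X + Q) <= Lam * \tr Q) ->
  (* A is a metric space *)
  hausdorff_space A ->
  (* b, c continuous *)
  continuous (fun z : 'rV[R]_N * A => b z.1 z.2) ->
  continuous (fun z : 'rV[R]_N * A => c z.1 z.2) ->
  (* local boundedness and local Lipschitz continuity of b *)
  (forall r : R, 0 < r -> exists K : R,
     (forall x a, enorm x <= r -> enorm (b x a) + `|c x a| <= K) /\
     (forall x y a, enorm x <= r -> enorm y <= r ->
        enorm (b x a - b y a) <= K * enorm (x - y))) ->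
  (* c >= 0, continuous in x uniformly in |x| <= r, a *)
  (forall x a, 0 <= c x a) ->
  (forall r e : R, 0 < r -> 0 < e -> exists d : R, 0 < d /\
     forall x y a, enorm x <= r -> enorm y <= r -> enorm (x - y) < d ->
       `|c x a - c y a| < e) ->
  (* growth condition at infinity *)
  0 < Ro ->
  (forall x, Ro <= enorm x ->
     (ereal_sup [set (dotv (b x a) x - c x a * enorm x ^+ 2 * ln (enorm x))%:E
                 | a in [set: A]] <= (lam - (N%:R - 1) * Lam)%:E)%E) ->
  (* structure condition *)
  (forall x t p,
     ((F x t p 0)%:E <= ereal_sup [set (c x a * t - dotv (b x a) p)%:E
                                   | a in [set: A]])%E) ->
  (* v is an LSC viscosity supersolution in R^N *)
  visc_supersol F v ->
  (* liminf_{|x| -> oo} v(x) / log|x| >= 0 *)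
  (forall e : R, 0 < e -> exists r : R,
     forall x, r < enorm x -> - e <= v x / ln (enorm x)) ->
  ((forall x a, c x a = 0) \/ (forall x, v x <= 0)) ->
  exists k : R, forall x, v x = k.
Proof.
move=> _ lam_gt0 lam_le_Lam ellipticF _ _ _ bc_bounded c_ge0 _ _ growth structureF supersol
  v_log_liminf reaction.
have b_bounded r : 0 < r -> exists K, forall x a, enorm x <= r -> enorm (b x a) <= K.
  move=> /bc_bounded [K [bcK _]]; exists K => x a xr.
  by have := bcK x a xr; have := normr_ge0 (c x a); lra.
exact: (liouville_const lam_gt0 lam_le_Lam ellipticF b_bounded c_ge0 growth structureF
  supersol v_log_liminf reaction).
Qed.
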